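(* Let $\mathbb V$ be the 2-vector space of a 2-term complex $V_1\xrightarrow{\mathrm d}V_0$, and let $L=\{X+\pi(\xi)+\xi:X\in\mathcal D,\xi\in\mathcal D^0\}$ be a Dirac structure of the omni-Lie 2-algebra $\mathfrak{gl}(\mathbb V)\oplus\mathbb V$ with characteristic pair $(\mathcal D,\pi)$, and equip $\mathcal D^0$ with the strict Lie 2-algebra bracket $[\xi,\eta]_{\mathcal D^0}=\pi(\xi)(\eta)$. Then an element $N\in\mathfrak{gl}(\mathbb V)$ lies in the normalizer $N_L$ if and only if (1) $[N,X]\in\mathcal D$ for all $X\in\mathcal D$, and (2) for all $\xi,\eta\in\mathcal D^0$, $N(\xi)\in\mathcal D^0$ and $N([\xi,\eta]_{\mathcal D^0})=[\xi,N(\eta)]_{\mathcal D^0}+[N(\xi),\eta]_{\mathcal D^0}$.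
   Context: All vector spaces are finite-dimensional over $\mathbb R$. For a 2-term complex $V_1\xrightarrow{\mathrm d}V_0$, $\mathbb V$ has objects $V_0$, morphisms $V_0\oplus V_1$ ($u+m$), $s(u+m)=u$, $t(u+m)=u+\mathrm dm$. Let $\mathrm{End}^0_{\mathrm d}(\mathbb V)=\{A=(A_0,A_1):A_0\mathrm d=\mathrm dA_1\}$, $\mathrm{End}^1(\mathbb V)=\mathrm{Hom}(V_0,V_1)$, $\delta\phi=(\mathrm d\phi,\phi\mathrm d)$; brackets $[A,B]$ componentwise commutator, $[A,\phi]=-[\phi,A]=A_1\phi-\phi A_0$, $[\phi,\psi]_\delta=\phi\mathrm d\psi-\psi\mathrm d\phi$. The strict Lie 2-algebra $\mathfrak{gl}(\mathbb V)$ has objects $\mathrm{End}^0_{\mathrm d}(\mathbb V)$, morphisms $A+\phi$, $s(A+\phi)=A$, $t(A+\phi)=A+\delta\phi$, bracket $[A+\phi,B+\psi]=[A,B]+[\phi,\psi]_\delta+[A,\psi]+[\phi,B]$, and acts on $\mathbb V$ by $A(u)=A_0u$, $(A+\phi)(u+m)=A_0u+(A_1m+\phi(u+\mathrm dm))$. The omni-Lie 2-algebra is $\mathfrak{gl}(\mathbb V)\oplus\mathbb V$ with pairing $\langle A+\phi+u+m,B+\psi+v+n\rangle=\tfrac12((A+\phi)(v+n)+(B+\psi)(u+m))$ and bracket $[\![A+\phi+u+m,B+\psi+v+n]\!]=[A+\phi,B+\psi]+\tfrac12((A+\phi)(v+n)-(B+\psi)(u+m))$ (similar formulas on objects), and the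 bracket $\{e_1,e_2\}=[\![e_1,e_2]\!]+\langle e_1,e_2\rangle$, i.e. $\{A+\phi+u+m,B+\psi+v+n\}=[A+\phi,B+\psi]+(A+\phi)(v+n)$. $L^\perp=\{e:\langle e,l\rangle=0\ \forall l\in L\}$; a Dirac structure is a 2-sub-vector space $L=L^\perp$ closed under $[\![\cdot,\cdot]\!]$. Characteristic pair of a maximal isotropic $L$: $\mathcal D=L\cap\mathfrak{gl}(\mathbb V)$, $\mathcal D^0=\{\xi\in\mathbb V:X(\xi)=0\ \forall X\in\mathcal D\}$ (levelwise), and a linear functor $\pi:\mathbb V\to\mathfrak{gl}(\mathbb V)$ with $\pi(\xi)(\eta)=-\pi(\eta)(\xi)$ on $\mathcal D^0$ and $L=\{X+\pi(\xi)+\xi\}$. The normalizer of a 2-sub-vector space $K\subset\mathfrak{gl}(\mathbb V)\oplus\mathbb V$ is $N_K=\{N\in\mathfrak{gl}(\mathbb V):\{N,k\}\in K\ \forall k\in K\}$ (levelwise, $N$ viewed as $N+0$). *)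

(* Finite-dimensional spaces V0 = R^n0, V1 = R^n1 (column
   vectors), d : V1 -> V0 a matrix; scalars in an arbitrary real field R. *)
From HB Require Import structures.
From mathcomp Require Import all_boot all_order all_algebra.
Set Implicit Arguments. Unset Strict Implicit. Unset Printing Implicit Defensive.
Import GRing.Theory.
Local Open Scope ring_scope.

Section Omni.
Variables (R : realFieldType) (n0 n1 : nat) (d : 'M[R]_(n0, n1)).

(* the 2-vector space V: objects V0, morphisms u+m in V0 (+) V1 *)
Definition V0 := 'cV[R]_n0.
Definition Vmor := ('cV[R]_n0 * 'cV[R]_n1)%type.

(* gl(V): objects A=(A0,A1) (in End^0_d when endo_d holds),
   morphisms A+phi = (A, phi) with phi in Hom(V0,V1) *)
Definition gl0 := ('M[R]_n0 * 'M[R]_n1)%type.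
Definition gl1 := (gl0 * 'M[R]_(n1, n0))%type.

Definition endo_d (A : gl0) : Prop := A.1 *m d = d *m A.2.

Definition delta (phi : 'M[R]_(n1, n0)) : gl0 := (d *m phi, phi *m d).

Definition br_gl0 (A B : gl0) : gl0 :=
  (A.1 *m B.1 - B.1 *m A.1, A.2 *m B.2 - B.2 *m A.2).
Definition br_gl1 (X Y : gl1) : gl1 :=
  let: (A, phi) := X in let: (B, psi) := Y in
  (br_gl0 A B,
   (phi *m d *m psi - psi *m d *m phi)
   + (A.2 *m psi - psi *m A.1) - (B.2 *m phi - phi *m B.1)).

Definition act0 (A : gl0) (u : V0) : V0 := A.1 *m u.
Definition act1 (X : gl1) (xi : Vmor) : Vmor :=
  (X.1.1 *m xi.1, X.1.2 *m xi.2 + X.2 *m (xi.1 + d *m xi.2)).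

(* the omni-Lie 2-algebra gl(V) (+) V: objects E0, morphisms E1 *)
Definition E0 := (gl0 * V0)%type.
Definition E1 := (gl1 * Vmor)%type.

Definition pair0 (e f : E0) : V0 := 2^-1 *: (act0 e.1 f.2 + act0 f.1 e.2).
Definition pair1 (e f : E1) : Vmor := 2^-1 *: (act1 e.1 f.2 + act1 f.1 e.2).

Definition bracket0 (e f : E0) : E0 :=
  (br_gl0 e.1 f.1, 2^-1 *: (act0 e.1 f.2 - act0 f.1 e.2)).
Definition bracket1 (e f : E1) : E1 :=
  (br_gl1 e.1 f.1, 2^-1 *: (act1 e.1 f.2 - act1 f.1 e.2)).

(* {e1,e2} = [[e1,e2]] + <e1,e2> *)
Definition curly0 (e f : E0) : E0 := (br_gl0 e.1 f.1, act0 e.1 f.2).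
Definition curly1 (e f : E1) : E1 := (br_gl1 e.1 f.1, act1 e.1 f.2).

Definition srcE (e : E1) : E0 := (e.1.1, e.2.1).
Definition tgtE (e : E1) : E0 := (e.1.1 + delta e.1.2, e.2.1 + d *m e.2.2).
Definition idE (e : E0) : E1 := ((e.1, 0), (e.2, 0)).

Definition is_subspace (T : lmodType R) (P : T -> Prop) : Prop :=
  P 0 /\ forall (a : R) (x y : T), P x -> P y -> P (a *: x + y).

Definition is_sub2 (L0 : E0 -> Prop) (L1 : E1 -> Prop) : Prop :=
  is_subspace L0 /\ is_subspace L1 /\
  (forall e, L0 e -> endo_d e.1) /\
  (forall e, L1 e -> endo_d e.1.1) /\
  (forall e, L1 e -> L0 (srcE e) /\ L0 (tgtE e)) /\
  (forall e, L0 e -> L1 (idE e)).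

Definition self_perp (L0 : E0 -> Prop) (L1 : E1 -> Prop) : Prop :=
  (forall e, L0 e <-> (endo_d e.1 /\ forall l, L0 l -> pair0 e l = 0)) /\
  (forall e, L1 e <-> (endo_d e.1.1 /\ forall l, L1 l -> pair1 e l = 0)).

Definition is_Dirac (L0 : E0 -> Prop) (L1 : E1 -> Prop) : Prop :=
  [/\ is_sub2 L0 L1, self_perp L0 L1,
      (forall e f, L0 e -> L0 f -> L0 (bracket0 e f))
    & (forall e f, L1 e -> L1 f -> L1 (bracket1 e f))].

(* D = L cap gl(V), levelwise *)
Definition D0 (L0 : E0 -> Prop) (X : gl0) : Prop := L0 (X, 0).
Definition D1 (L1 : E1 -> Prop) (X : gl1) : Prop := L1 (X, 0).

Definition Dann0 (L0 : E0 -> Prop) (u : V0) : Prop :=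
  forall X, D0 L0 X -> act0 X u = 0.
Definition Dann1 (L1 : E1 -> Prop) (xi : Vmor) : Prop :=
  forall X, D1 L1 X -> act1 X xi = 0.

Definition srcV (xi : Vmor) : V0 := xi.1.
Definition tgtV (xi : Vmor) : V0 := xi.1 + d *m xi.2.
Definition idV (u : V0) : Vmor := (u, 0).
Definition srcG (X : gl1) : gl0 := X.1.
Definition tgtG (X : gl1) : gl0 := X.1 + delta X.2.
Definition idG (A : gl0) : gl1 := (A, 0).

Definition char_pair (L0 : E0 -> Prop) (L1 : E1 -> Prop)
  (pi0 : V0 -> gl0) (pi1 : Vmor -> gl1) : Prop :=
  (forall (a : R) u v, pi0 (a *: u + v) = a *: pi0 u + pi0 v) /\
  (forall (a : R) x y, pi1 (a *: x + y) = a *: pi1 x + pi1 y) /\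
  (forall u, endo_d (pi0 u)) /\
  (forall x, srcG (pi1 x) = pi0 (srcV x) /\ tgtG (pi1 x) = pi0 (tgtV x)) /\
  (forall u, pi1 (idV u) = idG (pi0 u)) /\
  (forall u v, Dann0 L0 u -> Dann0 L0 v -> act0 (pi0 u) v = - act0 (pi0 v) u) /\
  (forall x y, Dann1 L1 x -> Dann1 L1 y -> act1 (pi1 x) y = - act1 (pi1 y) x) /\
  (forall e, L0 e <-> exists X u, [/\ D0 L0 X, Dann0 L0 u & e = (X + pi0 u, u)]) /\
  (forall e, L1 e <-> exists X x, [/\ D1 L1 X, Dann1 L1 x & e = (X + pi1 x, x)]).

(* normalizer N_L, levelwise (N viewed as N + 0) *)
Definition normalizer0 (L0 : E0 -> Prop) (N : gl0) : Prop :=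
  forall k, L0 k -> L0 (curly0 (N, 0) k).
Definition normalizer1 (L1 : E1 -> Prop) (N : gl1) : Prop :=
  forall k, L1 k -> L1 (curly1 (N, 0) k).

End Omni.

(* Write elements of L as X + pi(xi) + xi with X in D and xi in D^0.  Since
   {N, -} acts by the derivation [N, -] on gl(V) and by N on V,
   {N, X + pi(xi) + xi} = [N, X] + [N, pi(xi)] + N(xi), which lies in L
   exactly when N(xi) is in D^0 and [N, X] + [N, pi(xi)] - pi(N(xi)) is in D.
   Taking xi = 0 gives (1).  By maximal isotropy, D is the set of elements
   of gl(V) killing D^0, and since gl(V) acts on V by a representation,
   [N, pi(xi)] - pi(N(xi)) kills eta in D^0 exactly when the derivation
   rule (2) holds for xi, eta. *)
From HB Require Import structures.
From mathcomp Require Import all_boot all_order all_algebra.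
Import GRing.Theory Num.Theory.
Local Open Scope ring_scope.

Section NormalizerOfCharacteristicPair.

Variables (R : realFieldType) (G : zmodType) (W : lmodType R).
Variables (endo : G -> Prop) (br : G -> G -> G) (act : G -> W -> W).
Variables (L : (G * W)%type -> Prop) (pi : W -> G).

Hypothesis actv0 : forall A, act A 0 = 0.
Hypothesis actDl : forall A B w, act (A + B) w = act A w + act B w.
Hypothesis act_br : forall A B w, endo A -> endo B ->
  act (br A B) w = act A (act B w) - act B (act A w).
Hypothesis endo_br : forall A B, endo A -> endo B -> endo (br A B).
Hypothesis endo_sub : forall A B, endo A -> endo B -> endo (A - B).
Hypothesis L_perp : forall e, L e <-> (endo e.1 /\
  forall l, L l -> 2^-1 *: (act e.1 l.2 + act l.1 e.2) = 0).
Hypothesis endo_pi : forall u, endo (pi u).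

Definition annihilator (u : W) : Prop := forall Y, L (Y, 0) -> act Y u = 0.

Hypothesis L_char : forall e, L e <->
  exists X u, [/\ L (X, 0), annihilator u & e = (X + pi u, u)].

Lemma actBl A B w : act (A - B) w = act A w - act B w.
Proof. by apply/eqP; rewrite eq_sym subr_eq -actDl subrK. Qed.

Lemma act0v w : act 0 w = 0.
Proof. by apply: (addrI (act 0 w)); rewrite -actDl !addr0. Qed.

Lemma L_zero : L (0, 0).
Proof.
apply/L_perp; split; first by rewrite -(subrr (pi 0)); apply: endo_sub.
by move=> l _; rewrite /= act0v actv0 addr0 scaler0.
Qed.

Lemma act_L_annihilator {Z l} : L (Z, 0) -> L l -> act Z l.2 = 0.
Proof.
move=> /L_perp [_ perpZ] /perpZ /=; rewrite actv0 addr0 => /eqP.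
by rewrite scaler_eq0 invr_eq0 pnatr_eq0 => /eqP.
Qed.

Lemma L_graph_pi {u} : annihilator u -> L (pi u, u).
Proof.
by move=> Du; apply/L_char; exists 0, u; rewrite add0r; split=> //; apply: L_zero.
Qed.

Variables (N : G) (endoN : endo N).

Definition normalizes : Prop := forall k, L k -> L (br N k.1, act N k.2).

Definition derivation_on_annihilator : Prop :=
  forall xi eta, annihilator xi -> annihilator eta ->
    annihilator (act N xi) /\
    act N (act (pi xi) eta) = act (pi xi) (act N eta) + act (pi (act N xi)) eta.

Lemma normalizes_kernel :
  normalizes -> forall X, L (X, 0) -> L (br N X, 0).
Proof. by move=> NL X /NL /=; rewrite actv0. Qed.

Lemma normalizes_derivation : normalizes -> derivation_on_annihilator.
Proof.
move=> NL xi eta Dxi Deta.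
have /L_char [Y [v [LY Dv [EY Ev]]]] := NL _ (L_graph_pi Dxi).
rewrite /= in EY Ev; subst v; split=> //.
have {}EY : Y = br N (pi xi) - pi (act N xi) by rewrite EY addrK.
have := act_L_annihilator LY (L_graph_pi Deta).
by rewrite /= EY actBl act_br // => /eqP; rewrite subr_eq0 subr_eq addrC => /eqP.
Qed.

Lemma derivation_normalizes : derivation_on_annihilator -> normalizes.
Proof.
move=> Nder k Lk; have /L_char [X [u [LX Du Ek]]] := Lk; subst k.
have endoXu : endo (X + pi u) by case: ((L_perp (X + pi u, u)).1 Lk).
have [DNu _] := Nder u u Du Du.
apply/L_char; exists (br N (X + pi u) - pi (act N u)), (act N u).
split=> //; last by rewrite subrK.
apply/L_perp; split; first exact/endo_sub/endo_pi/endo_br.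
move=> l /L_char [Y [v [LY Dv ->]]] /=.
have [_ Nv] := Nder u v Du Dv.
have [DNv _] := Nder v v Dv Dv.
rewrite actv0 addr0 actBl act_br // !actDl (Dv _ LX) (DNv _ LX) !add0r.
by rewrite Nv -addrA -opprD subrr scaler0.
Qed.

Lemma normalizesP : normalizes <->
  (forall X, L (X, 0) -> L (br N X, 0)) /\ derivation_on_annihilator.
Proof.
split=> [NL | [_ Nder]]; last exact: derivation_normalizes.
by split; [exact: normalizes_kernel | exact: normalizes_derivation].
Qed.

End NormalizerOfCharacteristicPair.

Section RepresentationOnV.

Variables (R : realFieldType) (n0 n1 : nat) (d : 'M[R]_(n0, n1)).

Lemma endo_d_br (A B : gl0 R n0 n1) :
  endo_d d A -> endo_d d B -> endo_d d (br_gl0 A B).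
Proof.
case: A B => [A0 A1] [B0 B1]; rewrite /endo_d /br_gl0 /= => dA dB.
rewrite (mulmxBl (A0 *m B0)) (mulmxBr d (A1 *m B1)) -!mulmxA dB dA.
by rewrite !mulmxA dA dB.
Qed.

Lemma endo_d_sub (A B : gl0 R n0 n1) :
  endo_d d A -> endo_d d B -> endo_d d (A - B).
Proof.
case: A B => [A0 A1] [B0 B1]; rewrite /endo_d /= => dA dB.
by rewrite (mulmxBl A0) (mulmxBr d A1) dA dB.
Qed.

Lemma act0_br (A B : gl0 R n0 n1) u :
  act0 (br_gl0 A B) u = act0 A (act0 B u) - act0 B (act0 A u).
Proof. by rewrite /act0 /= mulmxBl !mulmxA. Qed.

Lemma act1_0 (X : gl1 R n0 n1) : act1 d X 0 = 0.
Proof. by rewrite /act1 /= !(mulmx0, addr0). Qed.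

Lemma act1Dl (X Y : gl1 R n0 n1) w :
  act1 d (X + Y) w = act1 d X w + act1 d Y w.
Proof. by rewrite /act1 /= !mulmxDl; congr pair; apply: addrACA. Qed.

Lemma act1_comp (X Y : gl1 R n0 n1) w : endo_d d Y.1 ->
  act1 d X (act1 d Y w) =
  (X.1.1 *m Y.1.1 *m w.1,
   X.1.2 *m Y.1.2 *m w.2 +
   (X.1.2 *m Y.2 + X.2 *m Y.1.1 + X.2 *m d *m Y.2) *m (w.1 + d *m w.2)).
Proof.
case: X Y w => [[A0 A1] f] [[B0 B1] g] [u m]; rewrite /endo_d /act1 /= => dB.
congr pair; first by rewrite mulmxA.
have fB0 : f *m B0 *m (u + d *m m) = f *m (B0 *m u) + f *m (d *m (B1 *m m)).
  by rewrite mulmxDr -!mulmxA (mulmxA B0) dB -mulmxA.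
by rewrite !mulmxDl fB0 !mulmxDr -!mulmxA !addrA.
Qed.

Lemma act1_br (X Y : gl1 R n0 n1) w : endo_d d X.1 -> endo_d d Y.1 ->
  act1 d (br_gl1 d X Y) w = act1 d X (act1 d Y w) - act1 d Y (act1 d X w).
Proof.
move=> dX dY; rewrite !act1_comp //.
case: X Y dX dY w => [[A0 A1] f] [[B0 B1] g] _ _ [u m] /=.
rewrite /act1 /br_gl1 /br_gl0 /=; apply: (congr2 pair) => /=.
  by rewrite mulmxBl.
rewrite [in RHS]opprD [RHS]addrACA -(mulmxBl _ _ m) -(mulmxBl _ _ (u + d *m m)).
congr (_ *m _ + _ *m _).
by rewrite !opprD !opprK !addrA [LHS](ACl (3*6*1*5*4*2))%AC.
Qed.

End RepresentationOnV.

Theorem mainTheorem10 (R : realFieldType) (n0 n1 : nat) (d : 'M[R]_(n0, n1))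
  (L0 : E0 R n0 n1 -> Prop) (L1 : E1 R n0 n1 -> Prop)
  (pi0 : V0 R n0 -> gl0 R n0 n1) (pi1 : Vmor R n0 n1 -> gl1 R n0 n1) :
  is_Dirac d L0 L1 -> char_pair d L0 L1 pi0 pi1 ->
  (forall N : gl0 R n0 n1, endo_d d N ->
    (normalizer0 L0 N <->
      (forall X, D0 L0 X -> D0 L0 (br_gl0 N X)) /\
      (forall xi eta, Dann0 L0 xi -> Dann0 L0 eta ->
         Dann0 L0 (act0 N xi) /\
         act0 N (act0 (pi0 xi) eta)
         = act0 (pi0 xi) (act0 N eta) + act0 (pi0 (act0 N xi)) eta))) /\
  (forall N : gl1 R n0 n1, endo_d d N.1 ->
    (normalizer1 d L1 N <->
      (forall X, D1 L1 X -> D1 L1 (br_gl1 d N X)) /\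
      (forall xi eta, Dann1 d L1 xi -> Dann1 d L1 eta ->
         Dann1 d L1 (act1 d N xi) /\
         act1 d N (act1 d (pi1 xi) eta)
         = act1 d (pi1 xi) (act1 d N eta) + act1 d (pi1 (act1 d N xi)) eta))).
Proof.
move=> [_ [perp0 perp1] _ _] [_ [_ [endo_pi0 [pi1_src [_ [_ [_ [ch0 ch1]]]]]]]].
split=> N endoN.
- apply: (@normalizesP R _ _ (endo_d d) (@br_gl0 R n0 n1) (@act0 R n0 n1)) => //.
  + by move=> A; rewrite /act0 mulmx0.
  + by move=> A B u; rewrite /act0 mulmxDl.
  + by move=> A B u _ _; apply: act0_br.
  + exact: endo_d_br.
  + exact: endo_d_sub.
- apply: (@normalizesP R _ _ (fun X => endo_d d X.1) (br_gl1 d) (act1 d)) => //.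
  + exact: act1_0.
  + exact: act1Dl.
  + exact: act1_br.
  + by move=> [A f] [B g]; apply: endo_d_br.
  + by move=> X Y; apply: endo_d_sub.
  + by move=> x; case: (pi1_src x); rewrite /srcG => -> _; apply: endo_pi0.
Qed.
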